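(* Let $T$, $\mathcal{J}=\langle N,B\rangle$, an allocation $(\mathcal{C}_s,\mathcal{B}_s)$, a node $v$ and a scenario $\sigma$ be as in the context. If $T_v$ can offer more than $N$ working VMs in scenario $\sigma$, then $T_v$ can offer exactly $N$ working VMs in scenario $\sigma$ (with the same bandwidth allocation $\mathcal{B}_s$).
   Context: $T=(V,L)$ is a rooted tree whose leaves form the set $H$ of physical machines (PMs) and whose internal nodes are switches; for a node $u$, $T_u$ is the subtree rooted at $u$ and $l_u$ is the link from $u$ to its parent. A request is $\mathcal{J}=\langle N,B\rangle$ with $N$ a positive integer and $B\ge0$. An allocation is a pair $(\mathcal{C}_s,\mathcal{B}_s)$ with $\mathcal{C}_s:H\to\mathbb{Z}_{\ge0}$ and $\mathcal{B}_s:L\to\mathbb{R}_{\ge0}$. A scenario is either ''no failure'' or the failure of a single PM $F\in H$. The subtree $T_v$ can offer $n$ working VMs in a scenario if there is an assignment $w:H\cap T_v\to\mathbb{Z}_{\ge0}$ with $w(h)\le\mathcal{C}_s(h)$ for all $h$, $w(F)=0$ if $F$ is the failed PM, $\sum_{h\in H\cap T_v}w(h)=n$, and for every node $u$ of $T_v$ (including $u=v$, whenever $l_u$ exists) $\min\{n_u,N-n_u\}\cdot B\le\mathcal{B}_s(l_u)$, where $n_u=\sum_{h\in H\cap T_u}w(h)$. *)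

From HB Require Import structures.
From mathcomp Require Import all_boot all_order all_algebra.
Set Implicit Arguments. Unset Strict Implicit. Unset Printing Implicit Defensive.
Import Order.TTheory GRing.Theory Num.Theory.
Local Open Scope ring_scope.

(* A rooted tree on the finite node set V is given by a parent map
   [par : V -> option V]; [par u = Some p] means the link l_u goes from u
   to its parent p; [par r = None] only for the root r. *)
Definition is_rooted_tree (V : finType) (par : V -> option V) : Prop :=
  exists r : V, par r = None /\
    forall x : V, exists k : nat, iter k (obind par) (Some x) = Some r.

(* [desc par u x] : x is a node of the subtree T_u (x = u or a descendant of u). *)
Definition desc (V : finType) (par : V -> option V) (u x : V) : bool :=
  connect (fun a b => par a == Some b) x u.

(* Leaves (= the PMs, set H): nodes with no child. *)
Definition is_leaf (V : finType) (par : V -> option V) (x : V) : bool :=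
  [forall y, par y != Some x].

Definition nsub (V : finType) (par : V -> option V) (w : V -> nat) (u : V) : nat :=
  (\sum_(h | is_leaf par h && desc par u h) w h)%N.

(* Scenario: [None] = no failure, [Some F] = failure of PM F.
   Allocation: [C] = C_s (VM slots per PM, only values on leaves matter),
   [Bw u] = B_s(l_u) (bandwidth on the link from u to its parent).
   [offers ... v n] : T_v can offer n working VMs in scenario [sc]. *)
Definition offers (R : realFieldType) (V : finType) (par : V -> option V)
  (N : nat) (B : R) (C : V -> nat) (Bw : V -> R) (sc : option V)
  (v : V) (n : nat) : Prop :=
  exists w : V -> nat,
    [/\ (forall h, is_leaf par h -> desc par v h -> (w h <= C h)%N),
        (forall F, sc = Some F -> desc par v F -> w F = 0%N),
        nsub par w v = n &
        (forall u, desc par v u -> par u != None ->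
           Num.min ((nsub par w u)%:R : R) (N%:R - (nsub par w u)%:R) * B
             <= Bw u)].

From HB Require Import structures.
From mathcomp Require Import all_boot all_order all_algebra.
From mathcomp Require Import zify.
Set Implicit Arguments. Unset Strict Implicit. Unset Printing Implicit Defensive.
Import Order.TTheory GRing.Theory Num.Theory.

(* Let x be a lowest node of T_v whose subtree still holds at least N VMs, so
   that every child subtree of x holds fewer than N.  Keep all the VMs of the
   heaviest child subtree T_c (m <= N of them) and fill up to N with VMs taken
   from the rest of T_x.  Above x every link then carries N VMs and elsewhere
   outside T_x none, so both cost nothing; links inside T_c are unchanged; and
   a link below x outside T_c carries a' <= N - m VMs where it used to carry
   a <= m, so a' + a <= N and min(a', N - a') <= a' <= min(a, N - a). *)

Lemma leq_sum_subset (I : finType) (P Q : pred I) (F : I -> nat) :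
  (forall i, P i -> Q i) -> (\sum_(i | P i) F i <= \sum_(i | Q i) F i)%N.
Proof. exact: (sub_le_big (op := addn) leqnn (fun m n => leq_addr n m)). Qed.

Lemma sum_truncate (I : finType) (P : pred I) (F : I -> nat) t :
  (t <= \sum_(i | P i) F i)%N ->
  exists G : I -> nat, [/\ forall i, (G i <= F i)%N,
    forall i, ~~ P i -> G i = 0%N & (\sum_(i | P i) G i)%N = t].
Proof.
elim: t => [|t IHt] le_tF.
  by exists (fun _ => 0%N); split => //; rewrite big1.
have [G [G_le G_out G_sum]] := IHt (ltnW le_tF).
case: (pickP (fun i => P i && (G i < F i)%N)) => [j /andP[Pj ltGFj] | G_full].
  exists (fun i => if i == j then (G j).+1 else G i); split.
  - by move=> i; case: eqP => [->|].
  - by move=> i Pi; case: eqP => [eij|_]; [rewrite eij Pj in Pi | exact: G_out].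
  rewrite (bigD1 j Pj) /= eqxx (eq_bigr G) => [|i /andP[_ /negbTE->] //].
  by rewrite -G_sum (bigD1 j Pj) /= addSn.
have : (\sum_(i | P i) F i <= \sum_(i | P i) G i)%N.
  by apply: leq_sum => i Pi; move: (G_full i); rewrite Pi /= ltnNge => /negbFE.
by move: le_tF; rewrite G_sum; lia.
Qed.

Section Descendants.

Variables (V : finType) (par : V -> option V).
Local Notation desc := (desc par).
Local Notation is_leaf := (is_leaf par).
Local Notation nsub := (nsub par).

Definition anc k (a : V) := iter k (obind par) (Some a).

Lemma iter_obind_None k : iter k (obind par) None = None.
Proof. by elim: k => //= k ->. Qed.

Lemma descP u h : reflect (exists k, anc k h = Some u) (desc u h).
Proof.
apply: (iffP idP) => [/connectP[p hp ->] | [k]].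
  elim: p h hp => [|a p IHp] h /=; first by exists 0%N.
  case/andP => /eqP ha /IHp[k ank].
  by exists k.+1; rewrite /anc iterSr /= ha.
elim: k h => [|k IHk] h; first by rewrite /anc => -[->]; apply: connect0.
rewrite /anc iterSr /=; case ha: (par h) => [a|]; last by rewrite iter_obind_None.
by move/IHk; apply: connect_trans; apply: connect1; rewrite /= ha.
Qed.

Lemma desc_refl u : desc u u.
Proof. exact: connect0. Qed.

Lemma desc_trans u x h : desc u x -> desc x h -> desc u h.
Proof. by move=> ux xh; apply: connect_trans xh ux. Qed.

Lemma desc_parent c p : par c = Some p -> desc p c.
Proof. by move=> cp; apply: connect1; rewrite /= cp. Qed.

Lemma desc_total u x h : desc u h -> desc x h -> desc u x || desc x u.
Proof.
move=> /descP[k1 ank1] /descP[k2 ank2]; case: (leqP k1 k2) => k12.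
  apply/orP; right; apply/descP; exists (k2 - k1)%N.
  by rewrite -ank2 /anc -ank1 /anc -iterD subnK.
apply/orP; left; apply/descP; exists (k1 - k2)%N.
by rewrite -ank1 /anc -ank2 /anc -iterD subnK // ltnW.
Qed.

Lemma desc_child x y : desc x y -> y != x -> exists2 c, par c = Some x & desc c y.
Proof.
move=> /descP[[|k]]; first by rewrite /anc => -[->]; rewrite eqxx.
rewrite /anc iterS; case ank: (iter k _ _) => [c|] //= cx _.
by exists c => //; apply/descP; exists k.
Qed.

Lemma desc_up u a b : desc u a -> a != u -> par a = Some b -> desc u b.
Proof.
move=> /descP[[|k]]; first by rewrite /anc => -[->]; rewrite eqxx.
by rewrite /anc iterSr /= => ank _ ab; apply/descP; exists k; rewrite /anc -ab.
Qed.

Section RootedTree.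

Hypothesis tree : is_rooted_tree par.

Lemma depth_exists :
  exists dep : V -> nat, forall c p, par c = Some p -> dep c = (dep p).+1.
Proof.
case: tree => r [r_root reach].
have reach_r x : exists k, iter k (obind par) (Some x) == Some r.
  by have [k xr] := reach x; exists k; apply/eqP.
exists (fun x => ex_minn (reach_r x)) => c p cp.
case: ex_minnP => dc /eqP cr c_min; case: ex_minnP => dp /eqP pr p_min.
case: dc cr c_min => [[cr] | dc cr c_min]; first by rewrite cr r_root in cp.
apply/eqP; rewrite eqn_leq !ltnS p_min; last by rewrite -cr iterSr /= cp.
by rewrite -ltnS c_min // iterSr /= cp pr.
Qed.

Lemma parent_not_desc c p : par c = Some p -> ~~ desc c p.
Proof.
have [dep dep_parent] := depth_exists.
have anc_dep k a b : anc k a = Some b -> dep a = (dep b + k)%N.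
  elim: k a => [|k IHk] a; first by rewrite /anc addn0 => -[->].
  rewrite /anc iterSr /=; case: (par a) (dep_parent a) => [a' /(_ a' erefl) ->|_].
    by move/IHk ->; rewrite addnS.
  by rewrite iter_obind_None.
by move=> cp; apply/descP => -[k /anc_dep]; rewrite (dep_parent _ _ cp); lia.
Qed.

Lemma lowest_witness (P : pred V) v :
  P v -> exists2 x, P x & forall c, par c = Some x -> ~~ P c.
Proof.
move=> Pv; have [dep dep_parent] := depth_exists.
case: (arg_maxnP dep Pv) => x Px x_max; exists x => // c cx.
by apply/negP => /x_max /=; rewrite (dep_parent _ _ cx) ltnn.
Qed.

End RootedTree.

Lemma nsub_mono w c y : desc c y -> (nsub w y <= nsub w c)%N.
Proof.
move=> cy; apply: leq_sum_subset => h /andP[lh yh].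
by rewrite lh (desc_trans cy yh).
Qed.

Lemma nsub_above w x y :
  (forall h, w h != 0%N -> desc x h) -> desc y x -> nsub w y = nsub w x.
Proof.
move=> w_supp yx; rewrite /nsub (bigID (desc x)) /= addnC big1 ?add0n.
  apply: eq_bigl => h; case: (boolP (desc x h)) => [xh|_]; last by rewrite !andbF.
  by rewrite (desc_trans yx xh) !andbT.
by move=> h /andP[_ xh]; apply/eqP; apply: contraNT xh; apply: w_supp.
Qed.

Lemma nsub_apart w x y : (forall h, w h != 0%N -> desc x h) ->
  ~~ desc y x -> ~~ desc x y -> nsub w y = 0%N.
Proof.
move=> w_supp yx xy; rewrite /nsub big1 // => h /andP[_ yh].
case: (eqVneq (w h) 0%N) => // /w_supp xh.
by have := desc_total yh xh; rewrite (negbTE yx) (negbTE xy).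
Qed.

End Descendants.

Section Trimming.

Variables (V : finType) (par : V -> option V) (N : nat) (w : V -> nat).
Local Notation desc := (desc par).
Local Notation is_leaf := (is_leaf par).
Local Notation nsub := (nsub par).

Definition kept_set x (K : pred V) : Prop :=
  [/\ forall h, K h -> is_leaf h && desc x h,
      (\sum_(h | K h) w h <= N)%N &
      forall y, desc x y -> y != x ->
        (forall h, is_leaf h -> desc y h -> K h) \/
        ((forall h, is_leaf h -> desc y h -> ~~ K h) /\
         (nsub w y <= \sum_(h | K h) w h)%N)].

Definition trimming x (w' : V -> nat) : Prop :=
  [/\ forall h, (w' h <= w h)%N,
      forall h, w' h != 0%N -> desc x h,
      nsub w' x = N &
      forall y, desc x y -> y != x ->
        nsub w' y = nsub w y \/ (nsub w' y + nsub w y <= N)%N].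

Lemma kept_set_heaviest_child x : is_rooted_tree par ->
  (forall c, par c = Some x -> nsub w c < N)%N -> exists K, kept_set x K.
Proof.
move=> tree small.
case: (pickP (fun c => par c == Some x)) => [c0 c0x | no_child]; last first.
  exists pred0; split => //; first by rewrite big_pred0_eq.
  move=> y xy yx; have [c cx _] := desc_child xy yx.
  by have := no_child c; rewrite cx eqxx.
have [c1 /eqP c1x c1_max] := @arg_maxnP _ c0 (fun c => par c == Some x) (nsub w) c0x.
exists (fun h => is_leaf h && desc c1 h); split.
- by move=> h /andP[lh c1h]; rewrite lh (desc_trans (desc_parent c1x) c1h).
- exact: ltnW (small c1 c1x).
move=> y xy yx; have [c cx cy] := desc_child xy yx.
case: (boolP (desc c1 y)) => c1y.
  by left => h lh yh; rewrite lh (desc_trans c1y yh).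
right; split; last first.
  by apply: leq_trans (nsub_mono w cy) _; apply: c1_max; rewrite cx.
move=> h lh yh; apply/negP => /andP[_ c1h].
case/orP: (desc_total c1h yh) => [|yc1]; first by rewrite (negbTE c1y).
case: (eqVneq c1 c) => [c1c | c1_neq_c]; first by rewrite c1c cy in c1y.
have := parent_not_desc tree cx.
by rewrite (desc_up (desc_trans cy yc1) c1_neq_c c1x).
Qed.

Lemma trimming_exists x K :
  (N <= nsub w x)%N -> kept_set x K -> exists w', trimming x w'.
Proof.
move=> Nx [K_sub K_le K_split]; set m := (\sum_(h | K h) w h)%N in K_le K_split.
pose P h := is_leaf h && desc x h && ~~ K h.
have nsub_x_split f : nsub f x = (\sum_(h | K h) f h + \sum_(h | P h) f h)%N.
  rewrite /nsub (bigID K); congr (_ + _)%N; apply: eq_bigl => h.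
  by case Kh: (K h); rewrite ?andbT ?andbF ?K_sub.
have : (N - m <= \sum_(h | P h) w h)%N by move: Nx; rewrite nsub_x_split -/m; lia.
move/sum_truncate => [g [g_le g_out g_sum]].
pose w' h := if K h then w h else g h.
have w'_K : (\sum_(h | K h) w' h)%N = m by apply: eq_bigr => h; rewrite /w' => ->.
have w'_P : (\sum_(h | P h) w' h)%N = (N - m)%N.
  by rewrite -g_sum; apply: eq_bigr => h /andP[_ /negbTE]; rewrite /w' => ->.
exists w'; split.
- by move=> h; rewrite /w'; case: ifP.
- move=> h; rewrite /w'; case: ifP => [/K_sub/andP[] // | Kh].
  by apply: contraR => xh; rewrite g_out // /P (negbTE xh) andbF.
- by rewrite nsub_x_split w'_K w'_P subnKC.
move=> y xy yx; case: (K_split y xy yx) => [kept | [dropped y_le]].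
  by left; apply: eq_bigr => h /andP[lh yh]; rewrite /w' kept.
right; suff : (nsub w' y <= N - m)%N by lia.
rewrite -w'_P; apply: leq_sum_subset => h /andP[lh yh].
by rewrite /P lh (desc_trans xy yh) dropped.
Qed.

End Trimming.

Local Open Scope ring_scope.

Definition cut_demand {R : realDomainType} (N a : nat) : R :=
  Num.min (a%:R) (N%:R - a%:R).

Section CutDemand.

Variables (R : realDomainType) (N : nat).
Local Notation cut_demand := (@cut_demand R N).

Lemma cut_demand0 : cut_demand 0 = 0.
Proof. by rewrite /cut_demand subr0 min_l ?ler0n. Qed.

Lemma cut_demandNn : cut_demand N = 0.
Proof. by rewrite /cut_demand subrr min_r ?ler0n. Qed.

Lemma cut_demand_le a b :
  (a <= b)%N -> (a + b <= N)%N -> cut_demand a <= cut_demand b.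
Proof.
move=> le_ab le_abN; rewrite le_min !ge_min ler_nat le_ab.
by rewrite lerBrDr -natrD ler_nat le_abN.
Qed.

End CutDemand.

Section Offers.

Variables (R : realFieldType) (V : finType) (par : V -> option V).
Variables (N : nat) (B : R) (C : V -> nat) (Bw : V -> R) (sc : option V).
Variables (v : V) (w : V -> nat).
Hypotheses (B_ge0 : 0 <= B) (Bw_ge0 : forall u, 0 <= Bw u).
Hypothesis w_cap : forall h, is_leaf par h -> desc par v h -> (w h <= C h)%N.
Hypothesis w_fail : forall F, sc = Some F -> desc par v F -> w F = 0%N.
Hypothesis w_bw : forall u, desc par v u -> par u != None ->
  cut_demand N (nsub par w u) * B <= Bw u.

Lemma offers_trimming x w' :
  desc par v x -> trimming par N w x w' -> offers par N B C Bw sc v N.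
Proof.
move=> vx [w'_le w'_supp w'_x w'_below]; exists w'; split.
- by move=> h lh vh; apply: leq_trans (w'_le h) (w_cap lh vh).
- by move=> F scF vF; apply/eqP; rewrite -leqn0 -(w_fail scF vF) w'_le.
- by rewrite (nsub_above w'_supp vx).
move=> y vy py; change (cut_demand N (nsub par w' y) * B <= Bw y).
case: (boolP (desc par y x)) => yx.
  by rewrite (nsub_above w'_supp yx) w'_x cut_demandNn mul0r Bw_ge0.
case: (boolP (desc par x y)) => xy; last first.
  by rewrite (nsub_apart w'_supp yx xy) cut_demand0 mul0r Bw_ge0.
have y_neq_x : y != x by apply: contraNneq yx => ->; apply: desc_refl.
apply: le_trans (w_bw vy py); apply: ler_wpM2r => //.
case: (w'_below y xy y_neq_x) => [-> // | le_N].
by apply: cut_demand_le => //; apply: leq_sum => h _.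
Qed.

End Offers.

Theorem lemma2 (R : realFieldType) (V : finType) (par : V -> option V)
  (N : nat) (B : R) (C : V -> nat) (Bw : V -> R) (sc : option V) (v : V)
  (n : nat) :
  is_rooted_tree par ->
  (0 < N)%N -> 0 <= B ->
  (forall u, 0 <= Bw u) ->
  (forall F, sc = Some F -> is_leaf par F) ->
  offers par N B C Bw sc v n ->
  (N < n)%N ->
  offers par N B C Bw sc v N.
Proof.
move=> tree _ B_ge0 Bw_ge0 _ [w [w_cap w_fail w_sum w_bw]] lt_Nn.
pose heavy x := desc par v x && (N <= nsub par w x)%N.
have [x /andP[vx Nx] x_lowest] :
    exists2 x, heavy x & forall c, par c = Some x -> ~~ heavy c.
  by apply: (lowest_witness tree (v := v)); rewrite /heavy desc_refl w_sum ltnW.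
have light_children c : par c = Some x -> (nsub par w c < N)%N.
  move=> cx; move: (x_lowest c cx).
  by rewrite /heavy (desc_trans vx (desc_parent cx)) ltnNge.
have [K kept] := kept_set_heaviest_child tree light_children.
have [w' trim] := trimming_exists Nx kept.
exact: (offers_trimming B_ge0 Bw_ge0 w_cap w_fail w_bw vx trim).
Qed.
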